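(* Let $s,d$ be integers with $1\le s$ and $d\ge 2s$. There is a constant $C$ depending only on $d$ such that the following holds for all $n\ge 2(d+1)$ and all real $K\ge 0$: if $\mathcal F\subseteq\binom{[n]}{d+1}$ is an $s$-witness family with $|\mathcal F|\ge\binom{n-1}{d}-Kn^{d-1}$, then there exists $x_0\in[n]$ such that the star $\mathcal F^*=\{F^*\in\binom{[n]}{d+1}: x_0\in F^*\}$ satisfies $|\mathcal F\triangle\mathcal F^*|\le C(K+1)n^{d-1}$.
   Context: $[n]=\{1,\dots,n\}$ and $\binom{[n]}{d+1}$ denotes the family of all $(d+1)$-element subsets of $[n]$; $\triangle$ denotes symmetric difference. For $n\ge d+1$ and $0\le s\le d$, a family $\mathcal F\subseteq\binom{[n]}{d+1}$ is an $s$-witness family if for every $F\in\mathcal F$ there exists $B_F\subseteq F$ with $|B_F|=s$ such that $F\cap F'\neq B_F$ for every $F'\in\mathcal F$. *)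

From mathcomp Require Import all_boot all_order all_algebra.
From mathcomp Require Export reals.
Set Implicit Arguments. Unset Strict Implicit. Unset Printing Implicit Defensive.

(* A family of (d+1)-subsets of [n] is modelled as F : {set {set 'I_n}}
   together with the hypothesis that every member has cardinality d+1. *)
Definition uniform_family (n k : nat) (F : {set {set 'I_n}}) : Prop :=
  forall A, A \in F -> #|A| = k.

Definition s_witness (n s : nat) (F : {set {set 'I_n}}) : Prop :=
  forall A, A \in F -> exists B : {set 'I_n},
    [/\ B \subset A, #|B| = s & forall A', A' \in F -> A :&: A' != B].

Definition star (n k : nat) (x0 : 'I_n) : {set {set 'I_n}} :=
  [set A : {set 'I_n} | (#|A| == k) && (x0 \in A)].

Definition symdiff (T : finType) (A B : {set T}) : {set T} :=
  (A :\: B) :|: (B :\: A).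

From mathcomp Require Import all_boot all_order all_algebra.
From mathcomp Require Import reals.
From mathcomp Require Import zify ring lra.
Set Implicit Arguments. Unset Strict Implicit. Unset Printing Implicit Defensive.

(* Call x a center of an s-set B if x is outside B, lies in every member of F
   whose witness set is B, and at most q = (d+1)^2 n^(d-s-1) members containing B
   avoid x.  An s-set without a center is a witness set of at most q members, so
   all but O(n^(d-1)) members A have a witness set B with a center c_B in A.  Deleting c_B maps these members to d-sets, injectively up to
   members that avoid the center of some B they contain.
   Two centered s-sets B, B' whose centers differ and lie outside B' resp. B have
   about n^(d-2s) d-sets D containing both and avoiding both centers; such a D is
   not the image of a member, or is the image of a member avoiding a center.  As
   |F| is close to the size of a star, there are O((K+1) n^(d-1)) such D, hence
   few such pairs (B, B').  If there are at least n^s/const centered s-sets, most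
   of them therefore share one center x0 and few members miss x0; otherwise F
   itself has only O((K+1) n^(d-1)) members. *)

Lemma card_bigcup_le (I T : finType) (P : pred I) (S : I -> {set T}) :
  #|\bigcup_(i | P i) S i| <= \sum_(i | P i) #|S i|.
Proof.
elim/big_rec2: _ => [|i u A _ IH]; first by rewrite cards0.
by rewrite (leq_trans (leq_card_setU _ _)) // leq_add2l.
Qed.

Lemma leq_expn2r m n e : m <= n -> m ^ e <= n ^ e.
Proof. by case: e => [//|e] le_mn; rewrite leq_exp2r. Qed.

Lemma ffact_le_expn n m : n ^_ m <= n ^ m.
Proof.
elim: m n => [//|m IH] n; rewrite ffactnS expnS leq_mul2l.
by rewrite (leq_trans (IH _)) ?orbT // leq_expn2r // leq_pred.
Qed.

Lemma bin_le_expn n m : 'C(n, m) <= n ^ m.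
Proof.
by rewrite (leq_trans _ (ffact_le_expn n m)) // -bin_ffact leq_pmulr ?fact_gt0.
Qed.

Lemma expn_subn_le_ffact n m : (n - m) ^ m <= n ^_ m.
Proof.
elim: m => [//|m IH]; rewrite ffactnSr expnSr leq_mul ?leq_sub2l //.
by rewrite (leq_trans _ IH) // leq_expn2r // leq_sub2l.
Qed.

Lemma expn_le_fact_bin c n N j :
  n <= c * (N - j) -> n ^ j <= j`! * c ^ j * 'C(N, j).
Proof.
move=> le_n; rewrite mulnC mulnA bin_ffact (leq_trans (leq_expn2r _ le_n)) //.
by rewrite expnMn mulnC leq_mul2r expn_subn_le_ffact orbT.
Qed.

Lemma leq_bin_addn m j a : 'C(m, j) <= 'C(m + a, j + a).
Proof.
elim: a => [|a IH]; first by rewrite !addn0.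
by rewrite !addnS binS (leq_trans IH) // leq_addl.
Qed.

Lemma bin_le_predn_add n d : 0 < n -> 0 < d -> 'C(n, d) <= 'C(n.-1, d) + n ^ d.-1.
Proof.
case: n d => [|n] [|d] //= _ _.
by rewrite binS leq_add2l (leq_trans (bin_le_expn _ _)) // leq_expn2r.
Qed.

Lemma sum_nat_bool_card (T : finType) (A : {pred T}) (P : pred T) :
  \sum_(i in A) P i = #|[set i in A | P i]|.
Proof.
rewrite -sum1_card big_mkcond [RHS]big_mkcond /=.
by apply: eq_bigr => i _; rewrite inE; case: (i \in A); case: (P i).
Qed.

Lemma card_supsets_le n k (S : {set {set 'I_n}}) (P : {set 'I_n}) :
  (forall A, A \in S -> #|A| = k) ->
  #|[set A in S | P \subset A]| <= n ^ (k - #|P|).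
Proof.
move=> S_unif; set X := [set A in S | P \subset A].
have inj_diff : {in X &, injective (fun A => A :\: P)}.
  move=> A1 A2; rewrite !inE => /andP[_ PA1] /andP[_ PA2] eqA.
  by rewrite -(setID A1 P) -(setID A2 P) eqA (setIidPr PA1) (setIidPr PA2).
rewrite -(card_in_imset inj_diff) (leq_trans _ (bin_le_expn n _)) //.
rewrite -[n in 'C(n, _)]card_ord -card_draws subset_leq_card //.
apply/subsetP => D /imsetP[A]; rewrite inE => /andP[AS PA] ->.
by rewrite inE cardsD (setIidPr PA) (S_unif A AS).
Qed.

Lemma bin_le_card_supsets_disjoint (T : finType) (S X : {set T}) k :
  [disjoint S & X] -> #|S| <= k ->
  'C(#|~: (S :|: X)|, k - #|S|) <=
    #|[set D : {set T} | [&& S \subset D, [disjoint D & X] & #|D| == k]]|.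
Proof.
move=> dSX le_S_k; rewrite -cards_draws.
set Ys := [set Y : {set T} | Y \subset ~: (S :|: X) & #|Y| == k - #|S|].
have YsP (Y : {set T}) : Y \in Ys ->
    [/\ [disjoint Y & S], [disjoint Y & X] & #|Y| = k - #|S|].
  by rewrite inE setCU subsetI -!disjoints_subset => /andP[/andP[-> ->] /eqP].
have inj : {in Ys &, injective (fun Y => Y :|: S)}.
  move=> Y1 Y2 /YsP[dY1 _ _] /YsP[dY2 _ _] eqY.
  move/(congr1 (fun Z : {set T} => Z :\: S)): eqY.
  by rewrite !setDUl setDv !setU0 (setDidPl dY1) (setDidPl dY2).
rewrite -(card_in_imset inj); apply/subset_leq_card/subsetP => D /imsetP[Y].
move=> /YsP[dYS dYX cardY] ->; rewrite inE subsetUr disjoints_subset subUset.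
rewrite -!disjoints_subset dYX dSX cardsU (disjoint_setI0 dYS) cards0 subn0.
by rewrite cardY subnK ?eqxx.
Qed.

Section Witnesses.

Variables (n d s : nat) (F : {set {set 'I_n}}).
Hypothesis F_unif : forall A, A \in F -> #|A| = d.+1.

Definition is_witness (B A : {set 'I_n}) :=
  (B \subset A) && [forall A' in F, A :&: A' != B].
Definition witnessed (B : {set 'I_n}) := [set A in F | is_witness B A].
Definition avoiding (B : {set 'I_n}) (x : 'I_n) :=
  [set A in F | (B \subset A) && (x \notin A)].
Definition q := (d.+1) ^ 2 * n ^ (d - s.+1).
Definition is_center (B : {set 'I_n}) (x : 'I_n) :=
  [&& x \notin B, [forall A in witnessed B, x \in A] & #|avoiding B x| <= q].

Lemma witness_meets (B A A' : {set 'I_n}) : is_witness B A -> A' \in F ->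
  B \subset A' -> exists y, y \in (A :&: A') :\: B.
Proof.
move=> /andP[BA /forall_inP noB] A'F BA'; apply/set0Pn; rewrite setD_eq0.
apply: contraNN (noB A' A'F) => subB.
by rewrite eqEsubset subB subsetI BA BA'.
Qed.

Lemma card_supsets_avoided_le (B a : {set 'I_n}) y : #|B| = s -> a \in witnessed B ->
  y \notin a -> #|[set A in F | y |: B \subset A]| <= d.+1 * n ^ (d - s.+1).
Proof.
move=> cardB; rewrite inE => /andP[aF wit_a] ya.
have yB : y \notin B by apply: contraNN ya; apply/subsetP; case/andP: wit_a.
pose U := \bigcup_(z in a :\: B) [set A in F | z |: (y |: B) \subset A].
apply: (@leq_trans #|U|).
  apply/subset_leq_card/subsetP => A; rewrite inE => /andP[AF].
  rewrite subUset sub1set => /andP[yA BA].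
  have [z] := witness_meets wit_a AF BA; rewrite !inE => /andP[zB /andP[za zA]].
  apply/bigcupP; exists z; first by rewrite inE zB.
  by rewrite inE AF !subUset !sub1set zA yA BA.
apply: (leq_trans (card_bigcup_le _ _)).
apply: (@leq_trans (\sum_(z in a :\: B) n ^ (d - s.+1))).
  apply: leq_sum => z; rewrite inE => /andP[zB za].
  have zy : z != y by apply: contraNneq ya => <-.
  have card_zyB : #|z |: (y |: B)| = s.+2.
    by rewrite !cardsU1 !inE negb_or zy zB yB cardB.
  by apply: leq_trans (card_supsets_le _ F_unif) _; rewrite card_zyB subSS.
rewrite sum_nat_const leq_mul2r -(F_unif aF) subset_leq_card ?orbT //.
exact: subsetDl.
Qed.

Lemma card_meeting_le (B Y : {set 'I_n}) : #|B| = s -> #|Y| <= d.+1 ->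
  {in Y, forall y, exists2 a, a \in witnessed B & y \notin a} ->
  #|[set A in F | (B \subset A) && (Y :&: A != set0)]| <= q.
Proof.
move=> cardB cardY avoided.
apply: (@leq_trans #|\bigcup_(y in Y) [set A in F | y |: B \subset A]|).
  apply/subset_leq_card/subsetP => A; rewrite inE => /andP[AF /andP[BA]].
  case/set0Pn => y; rewrite inE => /andP[yY yA]; apply/bigcupP; exists y => //.
  by rewrite inE AF subUset sub1set yA BA.
apply: (leq_trans (card_bigcup_le _ _)).
apply: (@leq_trans (\sum_(y in Y) d.+1 * n ^ (d - s.+1))).
  by apply: leq_sum => y /avoided[a wa ya]; apply: card_supsets_avoided_le wa ya.
by rewrite sum_nat_const /q mulnA leq_mul2r -mulnn leq_mul2r cardY !orbT.
Qed.

Lemma card_witnessed_le_common (B : {set 'I_n}) x y : #|B| = s ->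
  x != y -> x \notin B -> y \notin B ->
  (forall A, A \in witnessed B -> (x \in A) && (y \in A)) -> #|witnessed B| <= q.
Proof.
move=> cardB xy xB yB common.
apply: (@leq_trans #|[set A in F | y |: (x |: B) \subset A]|).
  apply/subset_leq_card/subsetP => A wA; have /andP[xA yA] := common A wA.
  by move: wA; rewrite !inE !subUset !sub1set xA yA => /andP[-> /andP[-> _]].
apply: (leq_trans (card_supsets_le _ F_unif)).
rewrite !cardsU1 !inE negb_or eq_sym xy xB yB cardB subSS.
by rewrite leq_pmull // expn_gt0.
Qed.

Lemma exists_center (B : {set 'I_n}) : #|B| = s -> q < #|witnessed B| ->
  exists x, is_center B x.
Proof.
move=> cardB large; have [A1] : exists A1, A1 \in witnessed B.
  by apply/set0Pn; rewrite -card_gt0 (leq_ltn_trans _ large).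
rewrite inE => /andP[A1F witA1].
have cardA1B : #|A1 :\: B| <= d.+1 by rewrite -(F_unif A1F) subset_leq_card ?subsetDl.
set common := [set y in A1 :\: B | [forall A in witnessed B, y \in A]].
have avoided y : y \in A1 :\: B -> y \notin common ->
    exists2 a, a \in witnessed B & y \notin a.
  by move=> yA1B; rewrite inE yA1B => /forall_inPn[a wa ya]; exists a.
have meets (A Y : {set 'I_n}) : A \in F -> B \subset A ->
    (forall y, y \in (A1 :&: A) :\: B -> y \in Y) -> Y :&: A != set0.
  move=> AF BA toY; have [y yA1AB] := witness_meets witA1 AF BA.
  by apply/set0Pn; exists y; move: (yA1AB); rewrite !inE toY // => /and3P[_ _ ->].
have [C0|[x xC]] := set_0Vmem common.
  suff : #|witnessed B| <= q by rewrite leqNgt large.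
  apply: leq_trans (card_meeting_le cardB cardA1B _); last first.
    by move=> y /avoided; apply; rewrite C0 inE.
  apply/subset_leq_card/subsetP => A; rewrite !inE => /andP[AF /andP[BA _]].
  by rewrite AF BA meets // => y; rewrite !inE => /and3P[-> -> _].
move: xC; rewrite !inE => /andP[/andP[xB xA1] xW].
exists x; rewrite /is_center xB xW /=.
apply: leq_trans (card_meeting_le (Y := A1 :\: B :\ x) cardB _ _).
- apply/subset_leq_card/subsetP => A; rewrite !inE => /andP[AF /andP[BA xA]].
  rewrite AF BA meets // => y; rewrite !inE => /and3P[yB yA1 yA].
  by rewrite yB yA1 !andbT; apply: contraNneq xA => <-.
- by apply: leq_trans cardA1B; apply/subset_leq_card/subsetDl.
move=> y; rewrite in_setD1 => /andP[yx yA1B]; apply: avoided => //.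
apply: contraTN large => yC; rewrite -leqNgt.
move: yC yA1B; rewrite !inE => /andP[_ /forall_inP yW] /andP[yB _].
apply: (card_witnessed_le_common cardB _ xB yB); first by rewrite eq_sym.
by move=> A wA; rewrite (forall_inP xW) ?yW.
Qed.

Hypothesis F_wit : s_witness s F.
Hypothesis s_gt0 : 0 < s.
Hypothesis s2_le_d : 2 * s <= d.
Hypothesis n_large : 2 * d.+1 <= n.
Variable x_def : 'I_n.

Definition ssets := [set B : {set 'I_n} | #|B| == s].
Definition centered := [set B in ssets | [exists x, is_center B x]].
Definition center_of (B : {set 'I_n}) := odflt x_def [pick x | is_center B x].
Definition Fcentered := [set A in F | [exists B in centered, is_witness B A]].
Definition defect := \sum_(B in centered) #|avoiding B (center_of B)|.

Lemma card_ssets_le : #|ssets| <= n ^ s.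
Proof. by rewrite card_draws card_ord bin_le_expn. Qed.

Lemma card_centered_le : #|centered| <= n ^ s.
Proof.
by apply: leq_trans card_ssets_le; apply/subset_leq_card/subsetP => B /setIdP[].
Qed.

Lemma center_ofP B : B \in centered -> is_center B (center_of B).
Proof.
case/setIdP => _ /existsP[x cx]; rewrite /center_of.
by case: pickP => [//|/(_ x)]; rewrite cx.
Qed.

Lemma centered_card B : B \in centered -> #|B| = s.
Proof. by rewrite !inE => /andP[/eqP]. Qed.

Lemma expn_s_q : n ^ s * q = (d.+1) ^ 2 * n ^ d.-1.
Proof. by rewrite /q mulnCA -expnD; congr (_ * n ^ _); lia. Qed.

Lemma card_F_diff_Fcentered : #|F :\: Fcentered| <= n ^ s * q.
Proof.
apply: (@leq_trans #|\bigcup_(B in ssets :\: centered) witnessed B|).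
  apply/subset_leq_card/subsetP => A; rewrite !inE => /andP[nA AF].
  have [B [BA /eqP cardB noB]] := F_wit AF.
  have wB : is_witness B A by rewrite /is_witness BA; apply/forall_inP.
  apply/bigcupP; exists B; last by rewrite inE AF.
  rewrite !inE cardB andbT; apply: contraNN nA => cB.
  by rewrite AF; apply/exists_inP; exists B; rewrite // !inE cardB.
apply: (leq_trans (card_bigcup_le _ _)).
apply: (@leq_trans (\sum_(B in ssets :\: centered) q)).
  apply: leq_sum => B; rewrite !inE => /andP[nc /eqP cardB].
  rewrite leqNgt; apply: contraNN nc => /(exists_center cardB)[x cx].
  by rewrite cardB eqxx; apply/existsP; exists x.
rewrite sum_nat_const leq_mul2r (leq_trans _ card_ssets_le) ?orbT //.
exact/subset_leq_card/subsetDl.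
Qed.

Lemma defect_le : defect <= n ^ s * q.
Proof.
apply: (@leq_trans (\sum_(B in centered) q)).
  by apply: leq_sum => B /center_ofP /and3P[].
by rewrite sum_nat_const leq_mul2r card_centered_le orbT.
Qed.

Definition witness_of (A : {set 'I_n}) :=
  odflt set0 [pick B in centered | is_witness B A].
Definition apex (A : {set 'I_n}) := center_of (witness_of A).
Definition shadow (A : {set 'I_n}) := A :\ apex A.
Definition shadows := shadow @: Fcentered.
Definition dsets := [set D : {set 'I_n} | #|D| == d].
Definition shadow_rep (D : {set 'I_n}) :=
  odflt set0 [pick A in Fcentered | shadow A == D].

Lemma FcenteredP A : A \in Fcentered ->
  [/\ A \in F, witness_of A \in centered, is_witness (witness_of A) A
    & apex A \in A :\: witness_of A].
Proof.
case/setIdP => AF /exists_inP[B cB wB].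
have [cwA wwA] : witness_of A \in centered /\ is_witness (witness_of A) A.
  by rewrite /witness_of; case: pickP => [B' /andP[]//|/(_ B)]; rewrite cB wB.
have /and3P[aB /forall_inP aW _] := center_ofP cwA.
by split; rewrite // inE aB aW // inE AF.
Qed.

Lemma witness_of_sub_shadow A : A \in Fcentered -> witness_of A \subset shadow A.
Proof.
case/FcenteredP => _ _ /andP[wA _]; rewrite inE => /andP[aw _].
by rewrite subsetD1 wA.
Qed.

Lemma shadowK A : A \in Fcentered -> apex A |: shadow A = A.
Proof. by case/FcenteredP => _ _ _; rewrite inE => /andP[_ /setD1K]. Qed.

Lemma shadows_sub_dsets : shadows \subset dsets.
Proof.
apply/subsetP => _ /imsetP[A /FcenteredP[AF _ _ aA] ->].
have := cardsD1 (apex A) A; rewrite F_unif // (setDP aA).1 add1n => -[cardD].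
by rewrite inE /shadow -cardD.
Qed.

Lemma shadow_repP D : D \in shadows ->
  shadow_rep D \in Fcentered /\ shadow (shadow_rep D) = D.
Proof.
case/imsetP => A An ->; rewrite /shadow_rep.
by case: pickP => [A' /andP[? /eqP]|/(_ A)] //=; rewrite An eqxx.
Qed.

Lemma shadow_eq_avoiding A A1 : A \in Fcentered -> A1 \in Fcentered ->
  shadow A = shadow A1 -> A != A1 -> A \in avoiding (witness_of A1) (apex A1).
Proof.
move=> An A1n eqD neq; have [AF _ _ _] := FcenteredP An.
rewrite inE AF (subset_trans (witness_of_sub_shadow A1n)) -?eqD ?subsetDl //=.
apply: contra neq => a1A; rewrite -(shadowK An) -(shadowK A1n) -eqD.
move: a1A; rewrite -{1}(shadowK An) in_setU1 eqD.
by rewrite /shadow setD11 orbF => /eqP->.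
Qed.

Lemma card_Fcentered_le_shadows : #|Fcentered| <= #|shadows| + defect.
Proof.
apply: (@leq_trans #|(shadow_rep @: shadows) :|:
                      \bigcup_(B in centered) avoiding B (center_of B)|).
  apply/subset_leq_card/subsetP => A An; rewrite in_setU.
  have [A1n eqD] := shadow_repP (imset_f shadow An).
  have [<-|neq] := eqVneq (shadow_rep (shadow A)) A; first by rewrite !imset_f.
  apply/orP; right; apply/bigcupP; exists (witness_of (shadow_rep (shadow A))).
    by case/FcenteredP: A1n.
  by apply: shadow_eq_avoiding; rewrite // eq_sym.
apply: (leq_trans (leq_card_setU _ _)).
exact: leq_add (leq_imset_card _ _) (card_bigcup_le _ _).
Qed.

Definition separated (B B' D : {set 'I_n}) :=
  [&& center_of B != center_of B', B :|: B' \subset D,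
      center_of B \notin D & center_of B' \notin D].
Definition conflicting := [set D in dsets |
  [exists B in centered, exists B' in centered, separated B B' D]].

Lemma shadow_separated B D : B \in centered -> D \in shadows -> B \subset D ->
  center_of B \notin D -> center_of B != apex (shadow_rep D) ->
  D \in shadow @: avoiding B (center_of B).
Proof.
move=> cB Ds BD cD ca; have [An eqD] := shadow_repP Ds.
move: An eqD ca; set A := shadow_rep D => An eqD ca.
have [AF _ _ _] := FcenteredP An.
apply/imsetP; exists A => //; rewrite inE AF.
have DA : D \subset A by rewrite -eqD subsetDl.
by rewrite (subset_trans BD DA) -(shadowK An) eqD in_setU1 negb_or ca.
Qed.

Lemma card_conflicting_le : #|conflicting| <= #|dsets :\: shadows| + defect.
Proof.
apply: (@leq_trans #|(dsets :\: shadows) :|: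
                      \bigcup_(B in centered) (shadow @: avoiding B (center_of B))|).
  apply/subset_leq_card/subsetP => D; rewrite inE => /andP[Dd].
  case/exists_inP => B cB /exists_inP[B' cB' /and4P[cc BBD cD cD']].
  rewrite in_setU in_setD Dd andbT; have [Ds|//] := boolP (D \in shadows).
  apply/orP; right; apply/bigcupP; move: BBD; rewrite subUset => /andP[BD B'D].
  have [ca|ca] := eqVneq (center_of B) (apex (shadow_rep D)).
    by exists B'; last by apply: shadow_separated; rewrite // -ca eq_sym.
  by exists B; last exact: shadow_separated.
apply: (leq_trans (leq_card_setU _ _)); rewrite leq_add2l.
apply: (leq_trans (card_bigcup_le _ _)); apply: leq_sum => B _.
exact: leq_imset_card.
Qed.

Definition compatible (B B' : {set 'I_n}) :=
  [&& center_of B != center_of B', center_of B \notin B' & center_of B' \notin B].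
Definition ncompatible := \sum_(B in centered) \sum_(B' in centered) compatible B B'.

Lemma sum_centered_sub_le (D : {set 'I_n}) : #|D| = d ->
  \sum_(B in centered) (B \subset D) <= 2 ^ d.
Proof.
move=> cardD; rewrite sum_nat_bool_card -cardD -card_powerset.
by apply/subset_leq_card/subsetP => B; rewrite !inE => /andP[_ ->].
Qed.

Lemma sum_separated_le (D : {set 'I_n}) : #|D| = d ->
  \sum_(B in centered) \sum_(B' in centered) separated B B' D <= 4 ^ d.
Proof.
move=> cardD; apply: (@leq_trans (\sum_(B in centered)
    \sum_(B' in centered) (B \subset D) * (B' \subset D))).
  apply: leq_sum => B _; apply: leq_sum => B' _.
  by case/boolP: (separated B B' D) => // /and4P[_]; rewrite subUset => /andP[-> ->].
under eq_bigr => B _ do rewrite -big_distrr /=.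
rewrite -big_distrl /= (_ : 4 = 2 * 2) // expnMn.
by rewrite leq_mul ?sum_centered_sub_le.
Qed.

Lemma compatible_separated_ge (B B' : {set 'I_n}) : B \in centered ->
  B' \in centered -> compatible B B' ->
  'C(n - (2 * s + 2), d - 2 * s) <= \sum_(D in dsets) separated B B' D.
Proof.
move=> cB cB' /and3P[neq cB_B' cB'_B].
have /and3P[cB_B _ _] := center_ofP cB; have /and3P[cB'_B' _ _] := center_ofP cB'.
set S := B :|: B'; set X := [set center_of B; center_of B'].
have cardS : #|S| <= 2 * s.
  by rewrite cardsU (centered_card cB) (centered_card cB') mul2n -addnn leq_subr.
have dSX : [disjoint S & X].
  rewrite disjoint_sym disjoints_subset subUset !sub1set !inE !negb_or.
  by rewrite cB_B cB_B' cB'_B cB'_B'.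
have cardC : #|~: (S :|: X)| = n - (2 * s + 2) + (2 * s - #|S|).
  rewrite cardsCs setCK card_ord cardsU (disjoint_setI0 dSX) cards0 subn0 cards2 neq.
  by lia.
have le_S_d : #|S| <= d by lia.
apply: leq_trans (leq_trans _ (bin_le_card_supsets_disjoint dSX le_S_d)) _.
  rewrite cardC (_ : d - #|S| = d - 2 * s + (2 * s - #|S|)); last by lia.
  exact: leq_bin_addn.
rewrite sum_nat_bool_card; apply/subset_leq_card/subsetP => D.
rewrite !inE => /and3P[SD dDX ->] /=.
have outD y : y \in X -> y \notin D by move=> yX; rewrite (disjointFl dDX yX).
by rewrite /separated neq SD !outD // !inE eqxx ?orbT.
Qed.

Lemma ncompatible_le :
  ncompatible * 'C(n - (2 * s + 2), d - 2 * s) <= 4 ^ d * #|conflicting|.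
Proof.
apply: (@leq_trans (\sum_(D in dsets)
    \sum_(B in centered) \sum_(B' in centered) separated B B' D)).
  rewrite big_distrl [X in _ <= X]exchange_big /=; apply: leq_sum => B cB.
  rewrite big_distrl [X in _ <= X]exchange_big /=; apply: leq_sum => B' cB'.
  have [/(compatible_separated_ge cB cB')|_] := boolP (compatible B B').
    by rewrite mul1n.
  by rewrite mul0n.
rewrite -sum_nat_bool_card big_distrr /=; apply: leq_sum => D.
rewrite inE => /eqP cardD.
have [_|nconf] := boolP [exists B in centered, exists B' in centered, separated B B' D].
  by rewrite muln1 sum_separated_le.
rewrite muln0 leqn0 sum_nat_eq0; apply/forall_inP => B cB.
rewrite sum_nat_eq0; apply/forall_inP => B' cB'; rewrite eqb0.
apply: contraNN nconf => sep.
by apply/exists_inP; exists B => //; apply/exists_inP; exists B'.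
Qed.

Definition load (x : 'I_n) := \sum_(B in centered) (center_of B == x).
Definition x0 := [arg max_(x > x_def) load x].

Lemma load_le_x0 x : load x <= load x0.
Proof. by rewrite /x0; case: arg_maxnP => // y _; apply. Qed.

Lemma sum_center_neq_load x :
  \sum_(B in centered) (x != center_of B) = #|centered| - load x.
Proof.
have -> : #|centered| = \sum_(B in centered) ((center_of B == x) + (x != center_of B)).
  by rewrite -sum1_card; apply: eq_bigr => B _; rewrite eq_sym; case: (x == _).
by rewrite big_split /= addKn.
Qed.

Lemma sum_mem_centered_le x : \sum_(B in centered) (x \in B) <= n ^ (s - 1).
Proof.
have ssets_unif B : B \in ssets -> #|B| = s by rewrite inE => /eqP.
have := card_supsets_le [set x] ssets_unif; rewrite cards1; apply: leq_trans.
rewrite sum_nat_bool_card; apply/subset_leq_card/subsetP => B; rewrite !inE sub1set.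
by case/andP => /andP[-> _] ->.
Qed.

Lemma ncompatible_ge : #|centered| * (#|centered| - load x0) <=
  ncompatible + 2 * (#|centered| * n ^ (s - 1)).
Proof.
rewrite -sum_nat_const; apply: (@leq_trans (\sum_(B in centered) \sum_(B' in centered)
    (compatible B B' + (center_of B \in B') + (center_of B' \in B)))).
  apply: leq_sum => B _.
  rewrite (leq_trans (leq_sub2l _ (load_le_x0 (center_of B)))) //.
  rewrite -sum_center_neq_load; apply: leq_sum => B' _; rewrite /compatible.
  by case: (_ != _); case: (_ \in B'); case: (_ \in B).
under eq_bigr => B _ do rewrite !big_split /=.
rewrite !big_split /= -addnA leq_add2l mul2n -addnn.
apply: leq_add; last rewrite exchange_big /=.
  all: by rewrite -sum_nat_const; apply: leq_sum => B _; apply: sum_mem_centered_le.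
Qed.

Lemma card_witnessed_centered B : B \in centered -> #|witnessed B| <= n ^ (d - s).
Proof.
move=> cB; have /and3P[cBB /forall_inP cW _] := center_ofP cB.
apply: (@leq_trans #|[set A in F | center_of B |: B \subset A]|).
  apply/subset_leq_card/subsetP => A wA; have cA := cW A wA.
  by move: wA; rewrite !inE subUset sub1set cA => /andP[-> /andP[-> _]].
apply: leq_trans (card_supsets_le _ F_unif) _.
by rewrite cardsU1 cBB (centered_card cB) add1n subSS.
Qed.

Lemma card_Fcentered_le_centered : #|Fcentered| <= #|centered| * n ^ (d - s).
Proof.
apply: (@leq_trans #|\bigcup_(B in centered) witnessed B|).
  apply/subset_leq_card/subsetP => A /FcenteredP[AF cwA wA _].
  by apply/bigcupP; exists (witness_of A); rewrite // inE AF.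
apply: (leq_trans (card_bigcup_le _ _)); rewrite -sum_nat_const.
exact: leq_sum card_witnessed_centered.
Qed.

Lemma card_F_le_Fcentered : #|F| <= #|Fcentered| + n ^ s * q.
Proof.
rewrite -(cardsID Fcentered F) leq_add ?card_F_diff_Fcentered //.
exact/subset_leq_card/subsetIr.
Qed.

Lemma card_missing_le :
  #|[set A in F | x0 \notin A]| <= n ^ s * q + (#|centered| - load x0) * n ^ (d - s).
Proof.
apply: (@leq_trans #|(F :\: Fcentered) :|:
                      \bigcup_(B in centered | center_of B != x0) witnessed B|).
  apply/subset_leq_card/subsetP => A; rewrite inE => /andP[AF x0A].
  rewrite in_setU in_setD AF andbT; have [An|//] := boolP (A \in Fcentered).
  have [_ cwA wA aA] := FcenteredP An.
  apply/bigcupP; exists (witness_of A); last by rewrite inE AF.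
  by rewrite cwA; apply: contraNneq x0A => <-; case/setDP: aA.
apply: (leq_trans (leq_card_setU _ _)); rewrite leq_add ?card_F_diff_Fcentered //.
apply: (leq_trans (card_bigcup_le _ _)); rewrite -sum_center_neq_load big_distrl /=.
rewrite big_mkcondr; apply: leq_sum => B cB.
case: eqP => [->//|/eqP cx0]; rewrite eq_sym cx0 mul1n.
exact: card_witnessed_centered.
Qed.

Variable k : nat.
Hypothesis F_large : 'C(n.-1, d) <= #|F| + k * n ^ d.-1.

(* The factor 3 suffices since n >= 2(d+1) gives n <= 3 (N - j) for both
   binomials 'C(N, j) bounded below. *)
Definition binomial_const := d`! * 3 ^ d.
Definition witness_const := (d.+1) ^ 2 + 4 * binomial_const +
  2 * binomial_const ^ 2 * 4 ^ d * (1 + 3 * (d.+1) ^ 2).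

Lemma binomial_const_gt0 : 0 < binomial_const.
Proof. by rewrite muln_gt0 fact_gt0 expn_gt0. Qed.

Lemma expn_le_bin_predn : n ^ d <= binomial_const * 'C(n.-1, d).
Proof. by apply: expn_le_fact_bin; lia. Qed.

Lemma expn_le_bin_subn :
  n ^ (d - 2 * s) <= binomial_const * 'C(n - (2 * s + 2), d - 2 * s).
Proof.
have le_n : n <= 3 * (n - (2 * s + 2) - (d - 2 * s)) by lia.
apply: leq_trans (expn_le_fact_bin le_n) _.
by rewrite leq_mul2r leq_mul ?leq_fact ?leq_pexp2l ?leq_subr ?orbT.
Qed.

Lemma card_unshadowed_defect_le :
  #|dsets :\: shadows| + defect <= (k + 1 + 3 * (d.+1) ^ 2) * n ^ d.-1.
Proof.
have cardU : #|dsets :\: shadows| = 'C(n, d) - #|shadows|.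
  by rewrite cardsD (setIidPr shadows_sub_dsets) card_draws card_ord.
have le_shadows : #|shadows| <= 'C(n, d).
  by rewrite -[n in 'C(n, _)]card_ord -card_draws subset_leq_card ?shadows_sub_dsets.
have pascal : 'C(n, d) <= 'C(n.-1, d) + n ^ d.-1 by apply: bin_le_predn_add; lia.
have := card_Fcentered_le_shadows; have := card_F_le_Fcentered; have := defect_le.
rewrite cardU expn_s_q !mulnDl mul1n.
move: le_shadows pascal F_large; lia.
Qed.

Lemma ncompatible_expn_le : ncompatible * n ^ (d - 2 * s) <=
  binomial_const * (4 ^ d * ((k + 1 + 3 * (d.+1) ^ 2) * n ^ d.-1)).
Proof.
rewrite mulnC (leq_trans (leq_mul expn_le_bin_subn (leqnn ncompatible))) //.
rewrite -mulnA leq_mul2l [_ * ncompatible]mulnC (leq_trans ncompatible_le) ?orbT //.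
rewrite leq_mul2l (leq_trans card_conflicting_le) ?orbT //.
exact: card_unshadowed_defect_le.
Qed.

Lemma card_missing_dense : n ^ s <= 2 * binomial_const * #|centered| ->
  #|[set A in F | x0 \notin A]| <= witness_const * (k + 1) * n ^ d.-1.
Proof.
move=> dense; set L := binomial_const; set N := #|centered|.
have e_ds : n ^ (d - s) = n ^ s * n ^ (d - 2 * s).
  by rewrite -expnD; congr (n ^ _); lia.
have e_m : n ^ s * n ^ (s - 1) * n ^ (d - 2 * s) = n ^ d.-1.
  by rewrite -!expnD; congr (n ^ _); lia.
have small_pairs : N * n ^ (s - 1) * n ^ (d - 2 * s) <= n ^ d.-1.
  by rewrite -e_m !leq_mul2r card_centered_le !orbT.
have gap : (N - load x0) * n ^ (d - s) <=
    2 * L * (L * (4 ^ d * ((k + 1 + 3 * (d.+1) ^ 2) * n ^ d.-1))) +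
    4 * L * n ^ d.-1.
  apply: (@leq_trans (2 * L * (N * (N - load x0)) * n ^ (d - 2 * s))).
    rewrite e_ds mulnA (_ : 2 * L * (N * (N - load x0)) = (N - load x0) * (2 * L * N)).
      by rewrite leq_mul2r leq_mul2l dense !orbT.
    by ring.
  apply: (@leq_trans (2 * L * (ncompatible + 2 * (N * n ^ (s - 1))) * n ^ (d - 2 * s))).
    by rewrite leq_mul2r leq_mul2l ncompatible_ge !orbT.
  rewrite mulnDr mulnDl -mulnA leq_add ?leq_mul2l ?ncompatible_expn_le ?orbT //.
  rewrite (_ : 2 * L * (2 * (N * n ^ (s - 1))) * n ^ (d - 2 * s) =
               4 * L * (N * n ^ (s - 1) * n ^ (d - 2 * s))); last by ring.
  by rewrite leq_mul2l small_pairs orbT.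
apply: leq_trans (card_missing_le) _; rewrite expn_s_q.
apply: leq_trans (leq_add (leqnn _) gap) _; rewrite /witness_const -/L.
move: (4 ^ d) ((d.+1) ^ 2) (n ^ d.-1) => X D2 m; clear -k L X D2 m; nia.
Qed.

Lemma card_F_sparse : 2 * binomial_const * #|centered| < n ^ s ->
  #|F| <= k * n ^ d.-1 + 2 * ((d.+1) ^ 2 * n ^ d.-1).
Proof.
move=> sparse; set L := binomial_const.
have e_d : n ^ s * n ^ (d - s) = n ^ d by rewrite -expnD; congr (n ^ _); lia.
have centered_part :
    2 * L * (#|centered| * n ^ (d - s)) <= L * #|F| + L * (k * n ^ d.-1).
  rewrite -mulnDr mulnA (leq_trans _ (leq_trans expn_le_bin_predn _)) //.
    by rewrite -e_d leq_mul2r ltnW ?orbT.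
  by rewrite leq_mul2l F_large orbT.
have upper : #|F| <= #|centered| * n ^ (d - s) + (d.+1) ^ 2 * n ^ d.-1.
  rewrite -expn_s_q (leq_trans card_F_le_Fcentered) // leq_add2r.
  exact: card_Fcentered_le_centered.
rewrite -(leq_pmul2l binomial_const_gt0) -/L -(leq_add2l (L * #|F|)) addnn -mul2n.
rewrite mulnA (leq_trans (leq_mul (leqnn _) upper)) // mulnDr.
by rewrite (mulnDr L) [L * (2 * _)]mulnA (mulnC L 2) addnA leq_add2r.
Qed.

Lemma card_missing_x0_le :
  #|[set A in F | x0 \notin A]| <= witness_const * (k + 1) * n ^ d.-1.
Proof.
have [dense|sparse] := leqP (n ^ s) (2 * binomial_const * #|centered|).
  exact: card_missing_dense.
rewrite setIdE (leq_trans (subset_leq_card (subsetIl _ _))) //.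
apply: (leq_trans (card_F_sparse sparse)).
have const_ge : 1 + 3 * (d.+1) ^ 2 <= witness_const.
  rewrite /witness_const (leq_trans _ (leq_addl _ _)) // leq_pmull //.
  by rewrite !muln_gt0 !expn_gt0 fact_gt0.
apply: (@leq_trans ((1 + 3 * (d.+1) ^ 2) * (k + 1) * n ^ d.-1)).
  by move: (n ^ d.-1) ((d.+1) ^ 2) => m D2; clear -k m D2; nia.
by rewrite !leq_mul2r const_ge !orbT.
Qed.
End Witnesses.

Lemma card_star_le n d (x : 'I_n) : #|star d.+1 x| <= 'C(n.-1, d).
Proof.
have inj : {in star d.+1 x &, injective (fun A : {set 'I_n} => A :\ x)}.
  move=> A1 A2; rewrite !inE => /andP[_ xA1] /andP[_ xA2] eqA.
  by rewrite -(setD1K xA1) -(setD1K xA2) eqA.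
have -> : 'C(n.-1, d) = #|[set D : {set 'I_n} | D \subset [set~ x] & #|D| == d]|.
  by rewrite cards_draws cardsC1 card_ord.
rewrite -(card_in_imset inj).
apply/subset_leq_card/subsetP => D /imsetP[A]; rewrite !inE => /andP[/eqP cardA xA] ->.
rewrite subsetDr; have := cardsD1 x A; rewrite xA cardA add1n => -[eqd].
by rewrite -eqd eqxx.
Qed.

Lemma card_symdiff_star_le n d (F : {set {set 'I_n}}) x :
  uniform_family d.+1 F ->
  #|symdiff F (star d.+1 x)| + #|F| <= 2 * #|[set A in F | x \notin A]| + 'C(n.-1, d).
Proof.
move=> F_unif; set S := star d.+1 x.
have FS_missing : #|F :\: S| <= #|[set A in F | x \notin A]|.
  apply/subset_leq_card/subsetP => A; rewrite !inE => /andP[nS AF].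
  by rewrite AF; apply: contraNN nS => xA; rewrite F_unif // eqxx.
have := (leq_card_setU (F :\: S) (S :\: F)).1; have := cardsID S F.
have := cardsID F S; rewrite setIC; have := card_star_le d x.
rewrite /symdiff -/S; move: FS_missing; lia.
Qed.

Lemma witness_stability_nat d s n k (F : {set {set 'I_n}}) :
  0 < s -> 2 * s <= d -> 2 * d.+1 <= n ->
  uniform_family d.+1 F -> s_witness s F ->
  'C(n.-1, d) <= #|F| + k * n ^ d.-1 ->
  exists x : 'I_n,
    #|symdiff F (star d.+1 x)| <= (2 * witness_const d + 1) * (k + 1) * n ^ d.-1.
Proof.
move=> s_gt0 s2_le_d n_large F_unif F_wit F_large.
have n_gt0 : 0 < n by lia.
set x := x0 d s F (Ordinal n_gt0); exists x.
have := card_missing_x0_le F_unif F_wit s_gt0 s2_le_d n_large (Ordinal n_gt0) F_large.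
move: (card_symdiff_star_le x F_unif) F_large; rewrite -/x.
move: #|symdiff _ _| #|F| #|[set A in F | _]| 'C(n.-1, d) (witness_const d) (n ^ d.-1).
by move=> sd f mi b c m; clear; nia.
Qed.

Import Order.TTheory GRing.Theory Num.Theory.
Local Open Scope ring_scope.

Theorem proposition2p7 (R : realType) (d : nat) :
  exists C : R, forall (s n : nat) (K : R) (F : {set {set 'I_n}}),
    (1 <= s)%N -> (2 * s <= d)%N ->
    (2 * (d + 1) <= n)%N -> 0 <= K ->
    uniform_family (d + 1) F -> s_witness s F ->
    ('C(n - 1, d))%:R - K * (n%:R ^+ (d - 1)) <= (#|F|)%:R ->
    exists x0 : 'I_n,
      (#|symdiff F (star (d + 1) x0)|)%:R <= C * (K + 1) * n%:R ^+ (d - 1).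
Proof.
exists (2 * (2 * witness_const d + 1))%:R.
move=> s n K F s_gt0 s2_le_d n_large K_ge0 F_unif F_wit F_large.
rewrite addn1 in n_large F_unif *; rewrite !subn1 in F_large *.
set k := (Num.truncn K).+1.
have /andP[trunc_le_K K_lt_k] := truncn_itv K_ge0.
have k_le_K1 : k%:R <= K + 1 by rewrite -natr1 lerD2r.
have F_large_nat : ('C(n.-1, d) <= #|F| + k * n ^ d.-1)%N.
  rewrite -(ler_nat R) natrD natrM natrX -lerBlDr (le_trans _ F_large) // lerB //.
  by rewrite ler_wpM2r ?exprn_ge0 ?ler0n ?ltW.
have [x sym] := witness_stability_nat s_gt0 s2_le_d n_large F_unif F_wit F_large_nat.
exists x; set c := (2 * witness_const d + 1)%N in sym *.
rewrite -(ler_nat R) !natrM natrX in sym; apply: le_trans sym _.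
rewrite ler_wpM2r ?exprn_ge0 ?ler0n // natrM [_ * c%:R]mulrC -mulrA ler_wpM2l //.
by rewrite natrD; lra.
Qed.
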